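(* Let $H_{ij}$, $i=1,\ldots,b$, $j=1,\ldots,s_i$, be $n=\sum_is_i$ null hypotheses with $p$-values $P_{ij}$, where true-null $p$-values are $U(0,1)$ and the rows $(P_{i1},\ldots,P_{is_i})$, $i=1,\ldots,b$, are mutually independent, with arbitrary dependence within each row. Fix $\alpha\in(0,1)$ and $\lambda$ with $(2b+3)^{-2/(b+2)}\le\lambda<1$, and let $\widehat n_0=(n-R(\lambda)+s_{\max})/(1-\lambda)$, where $s_{\max}=\max_is_i$ and $R(\lambda)=\#\{(i,j):P_{ij}\le\lambda\}$. The method that rejects $H_{ij}$ if and only if $P_{ij}\le\alpha/\widehat n_0$ has familywise error rate at most $\alpha$ for every configuration of true and false null hypotheses.
   Context: The familywise error rate is $\Pr(V\ge1)$, where $V$ is the number of rejected true null hypotheses. *)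

From HB Require Import structures.
From mathcomp Require Import all_boot all_order all_algebra.
From mathcomp Require Import all_classical all_reals all_analysis.
Set Implicit Arguments. Unset Strict Implicit. Unset Printing Implicit Defensive.
Import Order.TTheory GRing.Theory Num.Theory.
Local Open Scope classical_set_scope.
Local Open Scope ring_scope.

(* The sigma-algebra
   generated by row i is generated by the pi-system (containing the whole
   space) of "rectangle" events \bigcap_j [set w | P i j w \in B j] with
   B j Borel; the product rule on these pi-systems is equivalent to the
   mutual independence of the row random vectors (subfamilies are obtained
   by taking B = setT). *)
Definition rows_independent {d} {T : measurableType d} {R : realType}
  (Pr : probability T R) (b : nat) (s : 'I_b -> nat)
  (P : forall i : 'I_b, 'I_(s i) -> T -> R) : Prop :=
  forall B : forall i : 'I_b, 'I_(s i) -> set R,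
    (forall i j, measurable (B i j)) ->
    Pr (\bigcap_(i in [set: 'I_b]) \bigcap_(j in [set: 'I_(s i)])
          (P i j @^-1` B i j)) =
    (\prod_(i < b) Pr (\bigcap_(j in [set: 'I_(s i)]) (P i j @^-1` B i j)))%E.

Definition uniform01 {d} {T : measurableType d} {R : realType}
  (Pr : probability T R) (X : T -> R) : Prop :=
  forall t : R, 0 <= t <= 1 -> Pr [set w | X w <= t] = t%:E.

Definition Rcount {T : Type} {R : realType} (b : nat) (s : 'I_b -> nat)
  (P : forall i : 'I_b, 'I_(s i) -> T -> R) (lam : R) (w : T) : nat :=
  \sum_(i < b) #|[set j : 'I_(s i) | (P i j w <= lam)%R]|.

Definition n0hat {T : Type} {R : realType} (b : nat) (s : 'I_b -> nat)
  (P : forall i : 'I_b, 'I_(s i) -> T -> R) (lam : R) (w : T) : R :=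
  (((\sum_(i < b) s i)%:R - (Rcount P lam w)%:R + (\max_(i < b) s i)%:R)
     / (1 - lam)).

Definition FWER {d} {T : measurableType d} {R : realType}
  (Pr : probability T R) (b : nat) (s : 'I_b -> nat)
  (P : forall i : 'I_b, 'I_(s i) -> T -> R)
  (truenull : forall i : 'I_b, 'I_(s i) -> bool) (alpha lam : R) : \bar R :=
  Pr [set w | exists i : 'I_b, exists j : 'I_(s i),
        truenull i j /\ P i j w <= alpha / n0hat P lam w].

From HB Require Import structures.
From mathcomp Require Import all_boot all_order all_algebra.
From mathcomp Require Import all_classical all_reals all_analysis.
From mathcomp Require Import lra.
Import Order.TTheory GRing.Theory Num.Theory.
Local Open Scope classical_set_scope.
Local Open Scope ring_scope.

(* For a true null H_ij, let V_i be the number of true nulls outside row i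
   whose p-value exceeds lam.  Since n - R(lam) >= V_i, the cutoff
   alpha / n0hat is at most alpha (1 - lam) / (s_max + V_i), which depends
   only on the rows other than i.  Conditioning on the pattern of exceedances
   {P_kl > lam} of those rows (a rectangle event, so the product rule applies)
   gives Pr(P_ij <= cutoff) <= alpha E[1{P_ij > lam} / (s_max + V_i)], because
   Pr(P_ij <= t) = t and Pr(P_ij > lam) = 1 - lam.  Summing over the true nulls
   yields alpha E[sum_i W_i / (s_max + W - W_i)], where W_i counts the true
   nulls of row i above lam and W = sum_i W_i; as W_i <= s_max, each ratio is
   at most W_i / W, and these add up to at most 1. *)

Lemma sum_ratio_le1 (R : realFieldType) (n m : nat) (w : 'I_n -> nat) :
  (forall i, (w i <= m)%N) ->
  \sum_(i < n) (w i)%:R / (m + \sum_(k < n | k != i) w k)%:R <= 1 :> R.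
Proof.
move=> w_le_m; set W := (\sum_(i < n) w i)%N.
have wW i : (w i + \sum_(k < n | k != i) w k)%N = W by rewrite /W [RHS](bigD1 i).
have [W0|W_gt0] := posnP W.
  rewrite big1 // => i _.
  by move: (wW i); rewrite W0 => /eqP; rewrite addn_eq0 => /andP[/eqP-> _]; rewrite mul0r.
apply: (@le_trans _ _ (\sum_(i < n) (w i)%:R / W%:R)).
  apply: ler_sum => i _; have [->|wi_gt0] := posnP (w i); first by rewrite !mul0r.
  rewrite ler_wpM2l // lef_pV2 ?posrE ?ltr0n // ?ler_nat -?(wW i) ?leq_add2r //.
  by rewrite addn_gt0 (leq_trans wi_gt0).
by rewrite -mulr_suml -natr_sum divff // pnatr_eq0 -lt0n.
Qed.

Section FiniteProbability.
Context {d : measure_display} {T : measurableType d} {R : realType}.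
Variable Pr : probability T R.

Definition pr (A : set T) : R := fine (Pr A).

Lemma prE A : measurable A -> Pr A = (pr A)%:E.
Proof. by move=> mA; rewrite /pr fineK // fin_num_measure. Qed.

Lemma pr_ge0 A : 0 <= pr A.
Proof. exact: fine_ge0. Qed.

Lemma le_pr {A B} : measurable A -> measurable B -> A `<=` B -> pr A <= pr B.
Proof. by move=> mA mB AB; rewrite -lee_fin -!prE //; apply: le_measure; rewrite ?inE. Qed.

Lemma pr_bigcup_le {I : finType} (p : pred I) {F : I -> set T} :
  (forall i, measurable (F i)) ->
  pr (\bigcup_(i in [set i | p i]) F i) <= \sum_(i | p i) pr (F i).
Proof.
move=> mF; have -> : [set i | p i] = [set i | (i \in index_enum I) && p i].
  by apply/seteqP; split => i; rewrite /= mem_index_enum.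
rewrite bigcup_seq_cond.
pose Q A x := measurable A /\ pr A <= x.
suff [] : Q (\big[setU/set0]_(i <- index_enum I | p i) F i) (\sum_(i | p i) pr (F i)) by [].
apply: (big_ind2 Q); first by split; rewrite // /pr measure0.
  move=> A x B y [mA Ax] [mB By]; split; first exact: measurableU.
  apply: le_trans (lerD Ax By); rewrite -lee_fin EFinD -!prE //; last exact: measurableU.
  exact: measureU2.
by move=> i _; split.
Qed.

Lemma pr_uniform01_le (X : T -> R) t : uniform01 Pr X -> 0 <= t <= 1 ->
  pr (X @^-1` `]-oo, t]) = t.
Proof. by move=> unifX t01; rewrite /pr -[X in Pr X]/[set w | X w <= t] unifX. Qed.

Lemma pr_uniform01_gt (X : T -> R) t : measurable_fun setT X -> uniform01 Pr X ->
  0 <= t <= 1 -> pr (X @^-1` `]t, +oo[) = 1 - t.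
Proof.
move=> mX unifX t01; have -> : X @^-1` `]t, +oo[ = ~` (X @^-1` `]-oo, t]).
  by apply/seteqP; split => w /=; rewrite !in_itv /= ?andbT ltNge => /negP.
rewrite /pr probability_setC; last by rewrite -[_ @^-1` _]setTI; exact: mX.
by rewrite -[X in Pr X]/[set w | X w <= t] unifX.
Qed.

Context {K : finType} {f : T -> K}.
Hypothesis mf : forall k, measurable (f @^-1` [set k]).

Lemma measurable_preimage_fin (A : set K) : measurable (f @^-1` A).
Proof.
have -> : f @^-1` A = \bigcup_(k in A) f @^-1` [set k].
  by apply/seteqP; split => [w Afw|w [k Ak /= ->]]; first by exists (f w).
by apply: fin_bigcup_measurable; first exact: finite_finset.
Qed.

Lemma pr_preimage_sum (phi : pred K) :
  pr (f @^-1` [set k | phi k]) = \sum_(k | phi k) pr (f @^-1` [set k]).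
Proof.
suff pr_seq r : uniq r ->
    pr (f @^-1` [set k | (k \in r) && phi k]) = \sum_(k <- r | phi k) pr (f @^-1` [set k]).
  rewrite -(pr_seq (index_enum K)) ?index_enum_uniq //; congr (pr (f @^-1` _)).
  by apply/seteqP; split => k; rewrite /= mem_index_enum.
elim: r => [_|a r IHr /= /andP[a_notin_r r_uniq]].
  rewrite big_nil (_ : _ @^-1` _ = set0) ?/pr ?measure0 //.
  by apply/seteqP; split => w //=; rewrite in_nil.
rewrite big_cons -IHr //; case: ifP => phi_a; last first.
  by congr (pr (f @^-1` _)); apply/seteqP; split => k /=; rewrite inE;
    case: eqP => [->|]; rewrite ?phi_a ?andbF.
have -> : f @^-1` [set k | (k \in a :: r) && phi k] =
    f @^-1` [set a] `|` f @^-1` [set k | (k \in r) && phi k].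
  apply/seteqP; split => w /=; rewrite inE; first by case: eqP => [|_ /=]; [left|right].
  by case => [->|/andP[-> ->]]; rewrite ?orbT // eq_refl.
have ma := measurable_preimage_fin [set a].
have mr := measurable_preimage_fin [set k | (k \in r) && phi k].
apply: EFin_inj; rewrite EFinD -!prE ?measureU //; last exact: measurableU.
by apply/seteqP; split => // w [/= -> /andP[]]; rewrite (negbTE a_notin_r).
Qed.

Lemma sum_pr_fibers : \sum_k pr (f @^-1` [set k]) = 1.
Proof.
rewrite -(pr_preimage_sum xpredT) (_ : [set k | xpredT k] = setT); last exact/seteqP.
by rewrite preimage_setT /pr probability_setT.
Qed.

Lemma measurable_le_fiberwise (X : T -> R) (h : K -> R) :
  measurable_fun setT X -> measurable [set w | X w <= h (f w)].
Proof.
move=> mX; have -> : [set w | X w <= h (f w)] =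
    \bigcup_(k in setT) (f @^-1` [set k] `&` X @^-1` `]-oo, h k]).
  apply/seteqP; split => [w Xw|w [k _ [/= <-]]]; last by rewrite in_itv.
  by exists (f w) => //; split; rewrite //= in_itv.
apply: fin_bigcup_measurable => [|k _]; first exact: finite_finset.
by apply: measurableI; rewrite // -[_ @^-1` _]setTI; apply: mX.
Qed.

End FiniteProbability.

Section ExceedancePatterns.
Context {b : nat} {s : 'I_b -> nat}.

(* [g k j] records whether the p-value [P k j] exceeds [lam]. *)
Definition pattern := {dffun forall k : 'I_b, {ffun 'I_(s k) -> bool}}.

Definition erase_row i (g : pattern) : pattern :=
  [ffun k => if k == i then [ffun => false] else g k].

Definition n_below (g : pattern) := (\sum_(k < b) #|[set j | ~~ g k j]%SET|)%N.
Definition smax := (\max_(i < b) s i)%N.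

Variable truenull : forall i : 'I_b, 'I_(s i) -> bool.

Definition true_exceed i (g : pattern) := #|[set j | truenull i j && g i j]%SET|.
Definition true_exceed_off i (g : pattern) := (\sum_(k < b | k != i) true_exceed k g)%N.

Lemma true_exceed_le_smax i g : (true_exceed i g <= smax)%N.
Proof. by rewrite (leq_trans (max_card _)) // card_ord (leq_bigmax i). Qed.

Lemma smax_gt0 {i} (j : 'I_(s i)) : (0 < smax)%N.
Proof. by rewrite (leq_trans _ (leq_bigmax i)) // (leq_ltn_trans (leq0n j)). Qed.

Lemma true_exceed_off_erase i g : true_exceed_off i (erase_row i g) = true_exceed_off i g.
Proof.
apply: eq_bigr => k ki; apply: eq_card => j.
by rewrite !inE /erase_row ffunE (negbTE ki).
Qed.

Lemma n_below_add_true_exceed_off i g :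
  (n_below g + true_exceed_off i g <= \sum_(k < b) s k)%N.
Proof.
have split_row k : (#|[set j | ~~ g k j]%SET| + #|[set j | g k j]%SET| = s k)%N.
  rewrite addnC (_ : [set j | ~~ g k j]%SET = ~: [set j | g k j]%SET) ?cardsC ?card_ord //.
  by apply/setP => j; rewrite !inE.
rewrite -(eq_bigr _ (fun k _ => split_row k)) big_split leq_add2l /= /true_exceed_off.
rewrite (big_mkcond (fun k => k != i)) leq_sum // => k _; case: ifP => // _.
by apply: subset_leq_card; apply/fintype.subsetP => j; rewrite !inE => /andP[].
Qed.

Lemma sum_true_exceed_ratio_le1 (R : realFieldType) g :
  \sum_(i < b) (true_exceed i g)%:R / (smax + true_exceed_off i g)%:R <= 1 :> R.
Proof. by apply: sum_ratio_le1 => i; exact: true_exceed_le_smax. Qed.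

End ExceedancePatterns.
Arguments pattern {b} s.
Arguments smax {b} s.

Section RowIndependence.
Context {d : measure_display} {T : measurableType d} {R : realType}.
Variables (Pr : probability T R) (b : nat) (s : 'I_b -> nat).
Variable P : forall i : 'I_b, 'I_(s i) -> T -> R.
Hypothesis mP : forall i j, measurable_fun setT (P i j).
Hypothesis indep : rows_independent Pr P.

Local Notation pr := (pr Pr).
Local Notation family := (forall k : 'I_b, 'I_(s k) -> set R).

Definition row_rect k (X : 'I_(s k) -> set R) := \bigcap_(j in setT) P k j @^-1` X j.
Definition rect (X : family) := \bigcap_(k in setT) row_rect k (X k).

Lemma rectP X w : rect X w <-> forall k j, X k j (P k j w).
Proof. by split => [Xw k j|Xw k _ j _]; [exact: Xw | exact: Xw]. Qed.

Lemma measurable_preimage_entry k j (A : set R) :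
  measurable A -> measurable (P k j @^-1` A).
Proof. by move=> mA; rewrite -[_ @^-1` _]setTI; exact: mP. Qed.

Lemma measurable_row_rect k X :
  (forall j, measurable (X j)) -> measurable (row_rect k X).
Proof.
move=> mX; apply: fin_bigcap_measurable => [|j _]; first exact: finite_finset.
exact: measurable_preimage_entry.
Qed.

Lemma measurable_rect X : (forall k j, measurable (X k j)) -> measurable (rect X).
Proof.
move=> mX; apply: fin_bigcap_measurable => [|k _]; first exact: finite_finset.
exact: measurable_row_rect.
Qed.

Definition unconstrained : family := fun _ _ => setT.
Definition splice i (X Y : family) : family := fun k => if k == i then X k else Y k.

Lemma row_rectI_splice i X Y :
  row_rect i (X i) `&` rect (splice i unconstrained Y) = rect (splice i X Y).
Proof.
apply/seteqP; split => w.
  move=> [Xw /rectP Yw]; apply/rectP => k j; have := Yw k j; rewrite /splice.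
  by case: eqP => [ki _|//]; subst k; exact: Xw.
move=> /rectP XYw; split.
  by move=> j _; have := XYw i j; rewrite /splice eqxx.
by apply/rectP => k j; have := XYw k j; rewrite /splice; case: eqP.
Qed.

(* In the product formula for [splice i unconstrained Y], the row-[i] factor
   is [Pr setT = 1]. *)
Lemma pr_row_rectI_splice i X Y :
  (forall k j, measurable (X k j)) -> (forall k j, measurable (Y k j)) ->
  pr (row_rect i (X i) `&` rect (splice i unconstrained Y)) =
  pr (row_rect i (X i)) * pr (rect (splice i unconstrained Y)).
Proof.
move=> mX mY.
have m_splice Z : (forall k j, measurable (Z k j)) -> forall k j, measurable (splice i Z Y k j).
  by move=> mZ k j; rewrite /splice; case: ifP.
have mU : forall k j, measurable (unconstrained k j) by move=> *; exact: measurableT.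
apply: EFin_inj; rewrite row_rectI_splice EFinM -!prE;
  try solve [apply: measurable_rect; exact: m_splice | exact: measurable_row_rect].
rewrite !indep; try exact: m_splice.
rewrite [LHS](bigD1 i) //= [X in _ = (_ * X)%E](bigD1 i) //= /splice eqxx.
have -> : \bigcap_(j in setT) P i j @^-1` unconstrained i j = setT by apply/seteqP.
rewrite probability_setT mul1e.
by congr (_ * _)%E; apply: eq_bigr => k /negbTE ->.
Qed.

Definition entry_family (i : 'I_b) (j : 'I_(s i)) (A : set R) : family :=
  fun k j' => if (k == i) && (val j' == val j) then A else setT.

Lemma row_rect_entry_family i j A : row_rect i (entry_family i j A i) = P i j @^-1` A.
Proof.
apply/seteqP; split => [w Aw|w Aw j' _]; first by have := Aw j I; rewrite /entry_family !eqxx.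
by rewrite /entry_family eqxx /=; case: eqP => // /val_inj ->.
Qed.

Variable lam : R.

Definition exceed (w : T) : pattern s := [ffun k => [ffun j => lam < P k j w]].

Definition cell (g : pattern s) : family :=
  fun k j => if g k j then `]lam, +oo[%classic else `]-oo, lam]%classic.

Lemma measurable_cell g k j : measurable (cell g k j).
Proof. by rewrite /cell; case: ifP. Qed.

Lemma cellP g k j x : cell g k j x <-> (lam < x) = g k j.
Proof.
rewrite /cell; case: (g k j); rewrite /= in_itv /= ?andbT; first by split => [->|->].
by rewrite ltNge; split => [->|/negbFE].
Qed.

Lemma exceed_fiber g : exceed @^-1` [set g] = rect (cell g).
Proof.
apply/seteqP; split => w.
  by move=> /= <-; apply/rectP => k j; apply/cellP; rewrite !ffunE.
move=> /rectP gw; apply/ffunP => k; apply/ffunP => j; rewrite !ffunE.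
exact/cellP/gw.
Qed.

Lemma measurable_exceed_fiber g : measurable (exceed @^-1` [set g]).
Proof. by rewrite exceed_fiber; apply: measurable_rect; exact: measurable_cell. Qed.

Lemma erased_fiber i g : (erase_row i \o exceed) @^-1` [set g] =
  if g i == [ffun => false] then rect (splice i unconstrained (cell g)) else set0.
Proof.
case: ifP => gi; apply/seteqP; split => w //=.
- move=> <-; apply/rectP => k j; rewrite /splice; case: ifP => // ki.
  by apply/cellP; rewrite /erase_row !ffunE ki !ffunE.
- move=> /rectP gw; apply/ffunP => k; rewrite /erase_row ffunE.
  case: ifP => [/eqP ->|ki]; first by rewrite (eqP gi).
  by apply/ffunP => j; rewrite !ffunE; apply/cellP; have := gw k j; rewrite /splice ki.
- by move=> gE; move: gi; rewrite -gE /erase_row ffunE eqxx eqxx.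
Qed.

Lemma pr_entryI_erased_fiber i j A g : measurable A ->
  pr (P i j @^-1` A `&` (erase_row i \o exceed) @^-1` [set g]) =
  pr (P i j @^-1` A) * pr ((erase_row i \o exceed) @^-1` [set g]).
Proof.
move=> mA; rewrite erased_fiber; case: ifP => _; last by rewrite setI0 /pr measure0 mulr0.
rewrite -(row_rect_entry_family i j A) pr_row_rectI_splice //.
  by move=> k j'; rewrite /entry_family; case: ifP.
exact: measurable_cell.
Qed.

End RowIndependence.
Arguments exceed {d T R b s} P lam w.

Section FamilywiseErrorRate.
Context {d : measure_display} {T : measurableType d} {R : realType}.
Variables (Pr : probability T R) (b : nat) (s : 'I_b -> nat).
Variable P : forall i : 'I_b, 'I_(s i) -> T -> R.
Variables (truenull : forall i : 'I_b, 'I_(s i) -> bool) (alpha lam : R).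
Hypothesis mP : forall i j, measurable_fun setT (P i j).
Hypothesis unif : forall i j, truenull i j -> uniform01 Pr (P i j).
Hypothesis indep : rows_independent Pr P.
Hypotheses (alpha_gt0 : 0 < alpha) (alpha_lt1 : alpha < 1).
Hypotheses (lam_ge0 : 0 <= lam) (lam_lt1 : lam < 1).

Local Notation pr := (pr Pr).
Local Notation exceed := (exceed P lam).
Local Notation V := (true_exceed_off truenull).
Local Notation fiber i g := ((erase_row i \o exceed) @^-1` [set g]).

Let mexceed g : measurable (exceed @^-1` [set g]).
Proof. exact: measurable_exceed_fiber. Qed.

Lemma measurable_erased_fiber i g : measurable (fiber i g).
Proof. exact: (measurable_preimage_fin mexceed (erase_row i @^-1` [set g])). Qed.

Lemma Rcount_exceed w : Rcount P lam w = n_below (exceed w).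
Proof.
apply: eq_bigr => k _; apply: eq_card => j.
by rewrite inE /in_mem /= /in_set asboolb /exceed !ffunE -leNgt.
Qed.

Definition cutoff (v : nat) : R := alpha * (1 - lam) / (smax s + v)%:R.

Lemma cutoff_itv v : (0 < smax s)%N -> 0 <= cutoff v <= 1.
Proof.
move=> smax_gt0; have smax_pos : (0 < smax s + v)%N by rewrite addn_gt0 smax_gt0.
apply/andP; split; first by rewrite divr_ge0 ?mulr_ge0 // ?subr_ge0 ltW.
rewrite /cutoff ler_pdivrMr ?ltr0n // mul1r (@le_trans _ _ 1) ?ler1n //.
by rewrite mulrBr mulr1 lerBlDr (le_trans (ltW alpha_lt1)) // lerDl mulr_ge0 // ltW.
Qed.

Lemma threshold_le_cutoff i w : (0 < smax s)%N ->
  alpha / n0hat P lam w <= cutoff (V i (exceed w)).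
Proof.
move=> smax_gt0.
have count_le : (Rcount P lam w)%:R + (V i (exceed w))%:R <= (\sum_(k < b) s k)%:R :> R.
  by rewrite -natrD ler_nat Rcount_exceed n_below_add_true_exceed_off.
have smax_ge1 : 1 <= (smax s)%:R :> R by rewrite ler1n.
have V_ge0 : 0 <= (V i (exceed w))%:R :> R by [].
rewrite /n0hat -/(smax s) invf_div mulrA /cutoff.
rewrite ler_wpM2l ?mulr_ge0 ?subr_ge0 ?(ltW alpha_gt0) ?(ltW lam_lt1) //.
by rewrite lef_pV2 ?posrE ?natrD; lra.
Qed.

Definition reject i j := [set w | P i j w <= alpha / n0hat P lam w].

Lemma measurable_reject i j : measurable (reject i j).
Proof.
pose h (g : pattern s) :=
  alpha / (((\sum_(k < b) s k)%:R - (n_below g)%:R + (smax s)%:R) / (1 - lam)).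
have -> : reject i j = [set w | P i j w <= h (exceed w)].
  by apply/seteqP; split => w; rewrite /reject /= /n0hat Rcount_exceed.
by apply: measurable_le_fiberwise; [exact: mexceed | exact: mP].
Qed.

Lemma reject_sub i j :
  reject i j `<=` \bigcup_(g in [set g | xpredT g])
                    (P i j @^-1` `]-oo, cutoff (V i g)] `&` fiber i g).
Proof.
move=> w rej; exists (erase_row i (exceed w)) => //; split => //=.
by rewrite true_exceed_off_erase in_itv /= (le_trans rej) ?threshold_le_cutoff ?(smax_gt0 j).
Qed.

Lemma pr_cutoffI_fiber i j g : truenull i j ->
  pr (P i j @^-1` `]-oo, cutoff (V i g)] `&` fiber i g) =
  alpha / (smax s + V i g)%:R * pr (P i j @^-1` `]lam, +oo[ `&` fiber i g).
Proof.
move=> /unif unif_ij; rewrite !pr_entryI_erased_fiber //.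
rewrite pr_uniform01_le ?pr_uniform01_gt ?cutoff_itv ?(smax_gt0 j) ?lam_ge0 ?ltW //.
by rewrite /cutoff -!mulrA [X in alpha * X = _]mulrCA.
Qed.

Lemma exceedI_fiber i j g :
  P i j @^-1` `]lam, +oo[ `&` fiber i g =
  exceed @^-1` [set h : pattern s | h i j && (erase_row i h == g)].
Proof.
apply/seteqP; split => w /=; rewrite /exceed !ffunE in_itv /= andbT.
  by move=> [-> <-]; rewrite eqxx.
by move=> /andP[-> /eqP].
Qed.

(* The expectation of 1{P i j > lam} / (smax + V i), as a sum over exceedance
   patterns. *)
Definition mean_exceed_ratio i j :=
  \sum_(g : pattern s | g i j) pr (exceed @^-1` [set g]) / (smax s + V i g)%:R.

Lemma sum_pr_cutoffI_fiber i j : truenull i j ->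
  \sum_g pr (P i j @^-1` `]-oo, cutoff (V i g)] `&` fiber i g) =
  alpha * mean_exceed_ratio i j.
Proof.
move=> tn; rewrite mulr_sumr [RHS](partition_big (erase_row i) xpredT) //=.
apply: eq_bigr => g _; rewrite pr_cutoffI_fiber // exceedI_fiber (pr_preimage_sum Pr mexceed).
rewrite mulr_sumr; apply: eq_bigr => h /andP[_ /eqP <-].
by rewrite true_exceed_off_erase mulrAC mulrA.
Qed.

Lemma pr_reject_le i j : truenull i j -> pr (reject i j) <= alpha * mean_exceed_ratio i j.
Proof.
move=> tn; have mG g : measurable (P i j @^-1` `]-oo, cutoff (V i g)] `&` fiber i g).
  by apply: measurableI; [exact: measurable_preimage_entry | exact: measurable_erased_fiber].
rewrite -sum_pr_cutoffI_fiber //; apply: le_trans (pr_bigcup_le Pr xpredT mG).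
apply: le_pr (measurable_reject i j) _ (reject_sub i j).
by apply: fin_bigcup_measurable => [|g _]; [exact: finite_finset | exact: mG].
Qed.

Lemma sum_mean_exceed_ratio_le1 :
  \sum_(i < b) \sum_(j < s i | truenull i j) mean_exceed_ratio i j <= 1.
Proof.
have row_sum i : \sum_(j < s i | truenull i j) mean_exceed_ratio i j =
    \sum_g pr (exceed @^-1` [set g]) * ((true_exceed truenull i g)%:R / (smax s + V i g)%:R).
  rewrite (exchange_big_dep xpredT) //=; apply: eq_bigr => g _.
  rewrite (eq_bigl (fun j => j \in [set j | truenull i j && g i j]%SET)) => [|j];
    last by rewrite inE.
  by rewrite sumr_const -[_ *+ _]mulr_natr mulrAC mulrA.
rewrite (eq_bigr _ (fun i _ => row_sum i)) exchange_big /=.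
rewrite -[X in _ <= X](sum_pr_fibers Pr mexceed); apply: ler_sum => g _.
by rewrite -mulr_sumr ler_piMr ?pr_ge0 ?sum_true_exceed_ratio_le1.
Qed.

Definition false_rejection :=
  [set w | exists i : 'I_b, exists j : 'I_(s i), truenull i j /\ reject i j w].

Lemma false_rejectionE : false_rejection =
  \bigcup_(i in [set i | xpredT i]) \bigcup_(j in [set j | truenull i j]) reject i j.
Proof.
apply/seteqP; split => [w [i [j [tn rej]]]|w [i _ [j tn rej]]]; last by exists i, j.
by exists i => //; exists j.
Qed.

Lemma measurable_false_rejection_row i :
  measurable (\bigcup_(j in [set j | truenull i j]) reject i j).
Proof.
by apply: fin_bigcup_measurable => [|j _]; [exact: finite_finset | exact: measurable_reject].
Qed.

Lemma FWER_pr : FWER Pr P truenull alpha lam = (pr false_rejection)%:E.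
Proof.
rewrite -[FWER _ _ _ _ _]/(Pr false_rejection) prE // false_rejectionE.
apply: fin_bigcup_measurable => [|i _]; first exact: finite_finset.
exact: measurable_false_rejection_row.
Qed.

Lemma pr_false_rejection_le : pr false_rejection <= alpha.
Proof.
rewrite false_rejectionE.
apply: le_trans (pr_bigcup_le Pr xpredT measurable_false_rejection_row) _.
apply: (@le_trans _ _ (alpha * \sum_(i < b) \sum_(j < s i | truenull i j) mean_exceed_ratio i j)).
  rewrite mulr_sumr; apply: ler_sum => i _; rewrite mulr_sumr.
  apply: le_trans (pr_bigcup_le Pr _ (measurable_reject i)) _.
  by apply: ler_sum => j; exact: pr_reject_le.
by rewrite -[X in _ <= X]mulr1 ler_wpM2l ?(ltW alpha_gt0) ?sum_mean_exceed_ratio_le1.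
Qed.

End FamilywiseErrorRate.

Theorem mainTheorem6 (d : measure_display) (T : measurableType d)
  (R : realType) (Pr : probability T R)
  (b : nat) (s : 'I_b -> nat)
  (P : forall i : 'I_b, 'I_(s i) -> T -> R)
  (truenull : forall i : 'I_b, 'I_(s i) -> bool)
  (alpha lam : R) :
  (forall i j, measurable_fun [set: T] (P i j)) ->
  (forall i j, truenull i j -> uniform01 Pr (P i j)) ->
  rows_independent Pr P ->
  0 < alpha < 1 ->
  ((2 * b + 3)%:R `^ (- (2 / (b + 2)%:R)) <= lam) -> lam < 1 ->
  (FWER Pr P truenull alpha lam <= alpha%:E)%E.
Proof.
move=> mP unif indep /andP[alpha_gt0 alpha_lt1] lam_ge lam_lt1.
have lam_ge0 : 0 <= lam := le_trans (powR_ge0 _ _) lam_ge.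
by rewrite FWER_pr // lee_fin pr_false_rejection_le.
Qed.
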